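(* Let $t\geq 3$ be an integer and let $q$ be a prime power with $q\geq 2t-1$. Then there exists an MS$(q^{2t-1},t)$, i.e. a $t$-multimagic square of order $q^{2t-1}$.
   Context: An $n\times n$ integer matrix $A=(a_{i,j})$ is a general magic square if the sums of the entries in each row, each column, the main diagonal $\{a_{i,i}\}$ and the back diagonal $\{a_{i,n-1-i}\}$ are all equal. For a positive integer $t$, a general magic square $M=(m_{i,j})$ is a general $t$-multimagic square if for every $e=1,2,\dots,t$ the matrix $M^{*e}=(m_{i,j}^{e})$ (entrywise $e$-th power) is a general magic square. A general $t$-multimagic square of order $n$ whose $n^2$ entries are $n^2$ consecutive integers is called a $t$-multimagic square and denoted MS$(n,t)$. *)

From HB Require Import structures.
From mathcomp Require Import all_boot all_order all_algebra.
Set Implicit Arguments. Unset Strict Implicit. Unset Printing Implicit Defensive.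
Import Order.TTheory GRing.Theory Num.Theory.
Local Open Scope ring_scope.

Definition general_magic (n : nat) (A : 'M[int]_n) : Prop :=
  exists s : int,
    (forall i : 'I_n, \sum_(j < n) A i j = s) /\
    (forall j : 'I_n, \sum_(i < n) A i j = s) /\
    (\sum_(i < n) A i i = s) /\
    (\sum_(i < n) A i (rev_ord i) = s).

Definition mx_epow (n : nat) (M : 'M[int]_n) (e : nat) : 'M[int]_n :=
  \matrix_(i, j) (M i j ^+ e).

Definition general_multimagic (n t : nat) (M : 'M[int]_n) : Prop :=
  forall e : nat, (1 <= e <= t)%N -> general_magic (mx_epow M e).

Definition consecutive_entries (n : nat) (M : 'M[int]_n) : Prop :=
  exists a : int,
    perm_eq [seq M ij.1 ij.2 | ij : 'I_n * 'I_n]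
            [seq a + k%:Z | k <- iota 0 (n * n)].

Definition multimagic_square (n t : nat) (M : 'M[int]_n) : Prop :=
  general_multimagic t M /\ consecutive_entries M.

Definition prime_power (q : nat) : Prop :=
  exists p k : nat, prime p /\ (0 < k)%N /\ q = (p ^ k)%N.

(* Write t = d + 1 and let F be the field with q elements.  A vector x of
   F^(2t-1) encodes two polynomials f_0, f_1 of degree < t sharing their
   coefficient of degree d.  Fix 2t - 1 distinct points a_i and nonzero weights
   w_(b,i) different from 1 and -1.  If x and y encode f_b and g_b, the cell
   (x, y) of the square receives the vector (f_b(a_i) - w_(b,i) g_b(a_i))_(b,i)
   of F^(2(2t-1)), read as a number in base q.  Swapping the two weights on
   the last d points makes this a bijection from pairs of rows to all such
   vectors, so the entries are consecutive.
   Along a row, a column, the main diagonal and (once the rows are ordered so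
   that reversing the order is x |-> 1 - x) the back diagonal, the cell vector
   is an affine function of a single x whose values at any t coordinates can
   be prescribed, by polynomial interpolation.  Hence on each of these lines
   every t coordinates are uniformly distributed, and an e-th power sum with
   e <= t, which expands into sums of products of at most t coordinates, takes
   the same value on all of them. *)

From HB Require Import structures.
From mathcomp Require Import all_boot all_order all_algebra finfield zify ring.
Set Implicit Arguments. Unset Strict Implicit. Unset Printing Implicit Defensive.
Import GRing.Theory Num.Theory.

Section InvolutionEnum.
Variables (T : finType) (f : T -> T).
Hypothesis fK : involutive f.
Hypothesis fixed_uniq : forall x y, f x = x -> f y = y -> x = y.

Let below := [seq x <- enum T | enum_rank x < enum_rank (f x)].
Let fixed := [seq x <- enum T | f x == x].

Definition involution_enum := below ++ fixed ++ rev (map f below).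

Let mem_filter_enum (P : pred T) x : (x \in [seq y <- enum T | P y]) = P x.
Proof. by rewrite mem_filter mem_enum andbT. Qed.

Lemma rev_involution_enum : rev involution_enum = map f involution_enum.
Proof.
have rev_fixed : rev fixed = fixed.
  have : uniq fixed by rewrite filter_uniq ?enum_uniq.
  have : all (fun x => f x == x) fixed by apply: filter_all.
  case: fixed => [|x [|y s]] //= /and3P[/eqP fx /eqP fy _] /andP[].
  by rewrite inE (fixed_uniq fx fy) eqxx.
have map_fixed : map f fixed = fixed.
  rewrite -[RHS]map_id; apply/eq_in_map => x.
  by rewrite mem_filter => /andP[/eqP].
rewrite /involution_enum !rev_cat revK rev_fixed !map_cat map_rev (mapK fK).
by rewrite map_fixed catA.
Qed.

Lemma mem_involution_enum x : x \in involution_enum.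
Proof.
rewrite !mem_cat !mem_filter_enum mem_rev.
have [//|lt|eq] := ltngtP (enum_rank x) (enum_rank (f x)).
- by apply/or3P/Or33/mapP; exists (f x); rewrite ?mem_filter_enum fK.
- have -> : f x = x by apply/esym/enum_rank_inj/val_inj.
  by rewrite eqxx orbT.
Qed.

Lemma uniq_involution_enum : uniq involution_enum.
Proof.
have uniq_filter (P : pred T) : uniq [seq y <- enum T | P y].
  by rewrite filter_uniq ?enum_uniq.
rewrite !cat_uniq rev_uniq (map_inj_uniq (can_inj fK)) !uniq_filter andbT /=.
apply/andP; split; apply/hasPn => x.
- rewrite mem_cat mem_rev => /orP[|/mapP[y]].
    by rewrite !mem_filter_enum => /eqP ->; rewrite ltnn.
  by rewrite !mem_filter_enum => lt_y ->; rewrite fK -leqNgt ltnW.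
- rewrite mem_rev => /mapP[y]; rewrite !mem_filter_enum => lt_y ->.
  by rewrite fK; apply: contraTN lt_y => /eqP <-; rewrite ltnn.
Qed.

Lemma palindromic_enum n : #|T| = n ->
  exists2 psi : 'I_n -> T, bijective psi & forall i, psi (rev_ord i) = f (psi i).
Proof.
move=> card_T; pose e := involution_enum.
have size_e : size e = n.
  rewrite -card_T -(card_uniqP uniq_involution_enum).
  by apply: eq_card => x; rewrite mem_involution_enum.
have e_n : size e == n by rewrite size_e.
pose psi := tnth (Tuple e_n).
have nth_psi x0 i : psi i = nth x0 e i by rewrite /psi (tnth_nth x0).
exists psi => [|i].
  apply: inj_card_bij; last by rewrite card_ord card_T.
  move=> i j; have x0 := psi i; rewrite !(nth_psi x0) => /eqP.
  by rewrite nth_uniq ?size_e ?uniq_involution_enum // => /eqP/val_inj.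
have x0 := psi i; rewrite !(nth_psi x0) /=.
have -> : (n - i.+1 = size e - i.+1)%N by rewrite size_e.
rewrite -nth_rev ?size_e //.
by rewrite rev_involution_enum (nth_map x0) ?size_e.
Qed.
End InvolutionEnum.

Lemma sum_digits_recl B N (a : 'I_N.+1 -> nat) :
  \sum_(i < N.+1) a i * B ^ i = a ord0 + B * \sum_(i < N) a (lift ord0 i) * B ^ i.
Proof.
rewrite big_ord_recl expn0 muln1 big_distrr; congr (_ + _).
by apply: eq_bigr => i _; rewrite /= /bump add1n expnS mulnCA.
Qed.

Lemma sum_digits_inj B N (a b : 'I_N -> nat) :
  (forall i, a i < B) -> (forall i, b i < B) ->
  \sum_(i < N) a i * B ^ i = \sum_(i < N) b i * B ^ i -> a =1 b.
Proof.
elim: N a b => [|N IHN] a b a_lt b_lt; first by move=> _ [].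
rewrite !sum_digits_recl => eq_ab.
have B_gt0 : 0 < B := leq_ltn_trans (leq0n _) (a_lt ord0).
have eq0 : a ord0 = b ord0.
  have := congr1 (modn^~ B) eq_ab.
  by rewrite ![_ + B * _]addnC ![B * _]mulnC !modnMDl !modn_small.
have eq_lift : a \o lift ord0 =1 b \o lift ord0.
  apply: IHN => [i|i|]; rewrite ?a_lt ?b_lt //.
  have := congr1 (divn^~ B) eq_ab.
  by rewrite ![_ + B * _]addnC ![B * _]mulnC !divnMDl // !divn_small // !addn0.
by move=> i; case: (unliftP ord0 i) => [j ->|->]; [apply: eq_lift | ].
Qed.

Lemma sum_digits_lt B N (a : 'I_N -> nat) :
  (forall i, a i < B) -> \sum_(i < N) a i * B ^ i < B ^ N.
Proof.
elim: N a => [|N IHN] a a_lt; first by rewrite big_ord0.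
rewrite sum_digits_recl expnS.
apply: (@leq_trans (B * (\sum_(i < N) a (lift ord0 i) * B ^ i).+1)).
  by rewrite mulnS ltn_add2r a_lt.
by rewrite leq_mul2l IHN ?orbT.
Qed.

Section BaseCode.
Variables (F K : finType).

Definition base_code (z : {ffun K -> F}) : nat :=
  \sum_k enum_rank (z k) * #|F| ^ enum_rank k.

Lemma base_code_digits z :
  base_code z = \sum_(i < #|K|) enum_rank (z (enum_val i)) * #|F| ^ i.
Proof.
rewrite /base_code (reindex (@enum_val K predT)) /=.
  by apply: eq_bigr => i _; rewrite enum_valK.
by exists (@enum_rank K) => x _; rewrite ?enum_valK ?enum_rankK.
Qed.

Lemma base_code_int z :
  Posz (base_code z) = (\sum_k Posz (enum_rank (z k) * #|F| ^ enum_rank k))%R.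
Proof. by rewrite /base_code (big_morph Posz PoszD erefl). Qed.

Lemma base_code_inj : injective base_code.
Proof.
move=> z1 z2; rewrite !base_code_digits => /sum_digits_inj eq_digits.
apply/ffunP => k; rewrite -(enum_rankK k); apply/enum_rank_inj/val_inj.
by apply: eq_digits => i; apply: ltn_ord.
Qed.

Lemma base_code_lt z : base_code z < #|F| ^ #|K|.
Proof. by rewrite base_code_digits; apply: sum_digits_lt => i; apply: ltn_ord. Qed.

End BaseCode.

Lemma perm_iota_inj (T : finType) (g : T -> nat) :
  injective g -> (forall x, g x < #|T|) ->
  perm_eq [seq g x | x : T] (iota 0 #|T|).
Proof.
move=> g_inj g_lt.
have uniq_g : uniq [seq g x | x : T] by rewrite map_inj_uniq ?enum_uniq.
have sub_g : {subset [seq g x | x : T] <= iota 0 #|T|}.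
  by move=> _ /mapP[x _ ->]; rewrite mem_iota add0n g_lt.
have [|_ eq_g] := uniq_min_size uniq_g sub_g; first by rewrite size_iota size_map -cardE.
by apply: uniq_perm; rewrite ?iota_uniq.
Qed.

Local Open Scope ring_scope.

Lemma poly_eq0_on (R : idomainType) (I : finType) (x : I -> R) (A : {pred I})
    (p : {poly R}) :
  {in A &, injective x} -> (size p <= #|A|)%N ->
  {in A, forall i, root p (x i)} -> p = 0.
Proof.
move=> x_inj sz_p p_x; apply: (@roots_geq_poly_eq0 _ p [seq x i | i in A]).
- by apply/allP => _ /mapP[i iA ->]; apply: p_x; rewrite -mem_enum.
- by rewrite map_inj_in_uniq ?enum_uniq // => i j; rewrite !mem_enum; apply: x_inj.
- by rewrite size_map -cardE.
Qed.

Lemma exists_interpolating_poly (F : finFieldType) (I : finType)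
    (x c : I -> F) (A : {set I}) :
  {in A &, injective x} ->
  exists2 p : {poly F}, (size p <= #|A|)%N & {in A, forall i, p.[x i] = c i}.
Proof.
move=> x_inj; pose eval (p : {poly_#|A| F}) := [ffun r : 'I_#|A| => p.[x (enum_val r)]].
have eval_inj : injective eval.
  move=> p1 p2 /ffunP eq_p; apply/val_inj/eqP; rewrite -subr_eq0; apply/eqP.
  apply: (poly_eq0_on x_inj).
    by apply: leq_trans (size_polyD _ _) _; rewrite size_polyN geq_max !size_npoly.
  move=> i iA; have := eq_p (enum_rank_in iA i).
  by rewrite !ffunE enum_rankK_in // => eq_i; rewrite /root hornerD hornerN eq_i subrr.
have card_eval : (#|{ffun 'I_#|A| -> F}| <= #|{poly_#|A| F}|)%N.
  by rewrite card_npoly card_ffun card_ord.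
have /codomP[p /ffunP eq_p] :=
  inj_card_onto eval_inj card_eval [ffun r : 'I_#|A| => c (enum_val r)].
exists p; first exact: size_npoly.
by move=> i iA; have := eq_p (enum_rank_in iA i); rewrite !ffunE enum_rankK_in.
Qed.

Section AffineOrthogonalArray.
Variables (F : finZmodType) (J K : finType) (t : nat).
Local Notation V := {ffun J -> F}.
Local Notation Z := {ffun K -> F}.

Definition affine_oa (D : V -> Z) :=
  (forall v w, D (v + w) = D v + D w - D 0) /\
  (forall S : {set K}, (#|S| <= t)%N -> forall u : Z,
      exists v, {in S, forall k, D v k = u k}).

Definition restr (S : {set K}) (z : Z) : Z :=
  [ffun k => if k \in S then z k else 0].

Lemma restrB S : {morph restr S : y z / y - z}.
Proof. by move=> y z; apply/ffunP => k; rewrite !ffunE; case: ifP; rewrite ?subr0. Qed.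

Lemma restrD S : {morph restr S : y z / y + z}.
Proof. by move=> y z; apply/ffunP => k; rewrite !ffunE; case: ifP; rewrite ?addr0. Qed.

Lemma restr_id S z : restr S (restr S z) = restr S z.
Proof. by apply/ffunP => k; rewrite !ffunE; case: (k \in S). Qed.

Definition supported_on (S : {set K}) := [set u : Z | restr S u == u].

Lemma card_supported_on_gt0 S : (0 < #|supported_on S|)%N.
Proof.
apply/card_gt0P; exists 0; rewrite inE; apply/eqP/ffunP => k.
by rewrite !ffunE; case: ifP.
Qed.

Lemma sum_affine_oa (D : V -> Z) (S : {set K}) (G : Z -> int) :
  affine_oa D -> (#|S| <= t)%N -> (forall z, G (restr S z) = G z) ->
  #|supported_on S|%:R * \sum_v G (D v) = #|V|%:R * \sum_(u in supported_on S) G u.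
Proof.
move=> [D_affine D_onto] small_S.
pose ker := [set v | restr S (D v) == restr S (D 0)].
have fiber_sum (H : Z -> int) : (forall z, H (restr S z) = H z) ->
    \sum_v H (D v) = #|ker|%:R * \sum_(u in supported_on S) H u.
  move=> HS; under eq_bigr do rewrite -HS.
  rewrite (partition_big (fun v => restr S (D v)) (mem (supported_on S))) /=;
    last by move=> v _; rewrite inE restr_id.
  rewrite mulr_sumr; apply: eq_bigr => u; rewrite inE => /eqP Su.
  rewrite (eq_bigr (fun _ => H u)) => [|v /eqP -> //].
  have [v0 Dv0] := D_onto S small_S u.
  have restr_Dv0 : restr S (D v0) = u.
    by rewrite -Su; apply/ffunP => k; rewrite !ffunE; case: ifP => // /Dv0 ->.
  rewrite (reindex_inj (addIr v0)) /= (eq_bigl (mem ker)) ?sumr_const ?mulr_natl //.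
  move=> v; rewrite inE D_affine !restrB restrD restr_Dv0.
  by rewrite inE addrAC -subr_eq0 addrK subr_eq0.
move=> GS; rewrite fiber_sum //.
have := fiber_sum (fun _ => 1) (fun _ => erefl); rewrite !sumr_const => card_V.
by rewrite card_V mulrCA mulrA.
Qed.

Lemma affine_oa_moment (D1 D2 : V -> Z) (w : K -> F -> int) (e : nat) :
  affine_oa D1 -> affine_oa D2 -> (e <= t)%N ->
  \sum_v (\sum_k w k (D1 v k)) ^+ e = \sum_v (\sum_k w k (D2 v k)) ^+ e.
Proof.
move=> oa1 oa2 le_et.
have expand D : \sum_v (\sum_k w k (D v k)) ^+ e =
    \sum_(s : {ffun 'I_e -> K}) \sum_v \prod_(j < e) w (s j) (D v (s j)).
  rewrite exchange_big; apply: eq_bigr => v _.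
  by rewrite -[e in LHS]card_ord -prodr_const bigA_distr_bigA.
rewrite !expand; apply: eq_bigr => s _.
pose S := [set s j | j : 'I_e].
have small_S : (#|S| <= t)%N.
  by apply: leq_trans (leq_imset_card _ _) _; rewrite card_ord.
pose G (z : Z) := \prod_(j < e) w (s j) (z (s j)).
have GS z : G (restr S z) = G z.
  by apply: eq_bigr => j _; rewrite ffunE imset_f.
apply: (mulfI (x := #|supported_on S|%:R)).
  by rewrite pnatr_eq0 -lt0n card_supported_on_gt0.
by rewrite (sum_affine_oa (G := G)) // (sum_affine_oa (G := G)).
Qed.

End AffineOrthogonalArray.

Lemma card_bool_fibers (I : finType) (S : {set I * bool}) :
  (#|[set i | (i, false) \in S]| + #|[set i | (i, true) \in S]| <= #|S|)%N.
Proof.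
have pair_inj (b : bool) : injective (fun i : I => (i, b)) by move=> i j [].
rewrite -(cardsID [set k : I * bool | k.2] S) addnC; apply: leq_add;
  [rewrite -(card_imset _ (pair_inj true)) | rewrite -(card_imset _ (pair_inj false))];
  apply: subset_leq_card; apply/subsetP => k /imsetP[i];
  by rewrite !inE => iS ->; rewrite iS.
Qed.

Lemma half_uniq (F : fieldType) (a b : F) : a + a = 1 -> b + b = 1 -> a = b.
Proof.
move=> a2 b2; have two_a : a * (1 + 1) = 1 by rewrite mulrDr mulr1.
have two_b : b * (1 + 1) = 1 by rewrite mulrDr mulr1.
have two_nz : (1 + 1 : F) != 0.
  by apply: contra_eq_neq two_a => ->; rewrite mulr0 eq_sym oner_neq0.
by apply: (mulIf two_nz); rewrite two_a two_b.
Qed.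

Section Construction.
Variables (F : finFieldType) (d : nat).
Local Notation t := d.+1.

Definition point := ('I_t + 'I_d)%type.
Definition cell := (point * bool)%type.
Local Notation V := {ffun option ('I_d * bool) -> F}.
Local Notation Z := {ffun cell -> F}.

(* [pol false x] and [pol true x] have size at most [t] and share the
   coefficient of degree [d], so that [x] ranges over [F ^ (2 * t - 1)]. *)
Definition pol (b : bool) (x : V) : {poly F} :=
  \poly_(j < t) oapp (fun j' : 'I_d => x (Some (j', b))) (x None) (insub j).

Lemma pol_is_zmod_morphism b : zmod_morphism (pol b).
Proof.
move=> x y; apply/polyP => j; rewrite coefB !coef_poly.
by case: ltnP => _; [case: insub => [j'|] /=; rewrite !ffunE | rewrite subr0].
Qed.

HB.instance Definition _ b :=
  GRing.isZmodMorphism.Build V {poly F} (pol b) (pol_is_zmod_morphism b).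

Lemma size_pol b (x : V) : (size (pol b x) <= t)%N.
Proof. exact: size_poly. Qed.

Lemma coef_pol b (x : V) (j : 'I_d) : (pol b x)`_j = x (Some (j, b)).
Proof. by rewrite coef_poly ltnS ltnW // valK. Qed.

Lemma coef_pol_top b (x : V) : (pol b x)`_d = x None.
Proof. by rewrite coef_poly ltnSn insubF ?ltnn. Qed.

Lemma size_pol_top0 b (x : V) : x None = 0 -> (size (pol b x) <= d)%N.
Proof.
move=> x0; apply/leq_sizeP => j; rewrite leq_eqVlt => /predU1P[<-|lt_dj].
  by rewrite coef_pol_top.
by rewrite nth_default // (leq_trans (size_pol _ _)).
Qed.

Lemma pol_eq0 (x : V) : (forall b, pol b x = 0) -> x = 0.
Proof.
move=> x0; apply/ffunP => -[[j b]|]; rewrite ffunE.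
  by rewrite -coef_pol x0 coef0.
by rewrite -(coef_pol_top false) x0 coef0.
Qed.

Lemma pol_onto (p : bool -> {poly F}) :
  (forall b, size (p b) <= t)%N -> (p false)`_d = (p true)`_d ->
  exists x, forall b, pol b x = p b.
Proof.
move=> size_p eq_top.
exists [ffun o : option ('I_d * bool) =>
          if o is Some (j, b) then (p b)`_j else (p false)`_d] => b.
apply/polyP => j; rewrite coef_poly; case: ltnP => [lt_jt|le_tj].
  case: insubP => [j' _ <-|]; first by rewrite /= ffunE.
  rewrite -leqNgt /= => le_dj; have -> : j = d by lia.
  by rewrite ffunE; case: b.
by rewrite nth_default // (leq_trans (size_p b)).
Qed.

Variable alpha : point -> F.
Hypothesis alpha_inj : injective alpha.

Lemma pol_interpolation (S : {set cell}) (v : cell -> F) : (#|S| <= t)%N ->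
  exists x, {in S, forall k, (pol k.2 x).[alpha k.1] = v k}.
Proof.
move=> small_S; pose P b := [set i | (i, b) \in S].
have card_P : (#|P false| + #|P true| <= t)%N.
  exact: leq_trans (card_bool_fibers S) small_S.
have interp b :=
  exists_interpolating_poly (fun i => v (i, b)) (in2W alpha_inj) (A := P b).
have [p0 size_p0 p0_v] := interp false.
have [p1 size_p1 p1_v] := interp true.
have [q [size_q top_q q_v]] : exists q : bool -> {poly F},
    [/\ forall b, (size (q b) <= t)%N, (q false)`_d = (q true)`_d
      & forall b, {in P b, forall i, (q b).[alpha i] = v (i, b)}].
  have [P0|/set0Pn[i0 i0P]] := eqVneq (P false) set0.
    exists (fun=> p1); split=> [_||[]] //; last by move=> i; rewrite P0 inE.
    by apply: leq_trans size_p1 _; move: card_P; rewrite P0 cards0.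
  have [P1|/set0Pn[i1 i1P]] := eqVneq (P true) set0.
    exists (fun=> p0); split=> [_||[]] //; last by move=> i; rewrite P1 inE.
    by apply: leq_trans size_p0 _; move: card_P; rewrite P1 cards0 addn0.
  exists (fun b => if b then p1 else p0); split=> [[]|| []] //.
  - exact: leq_trans size_p1 (leq_trans (leq_addl _ _) card_P).
  - exact: leq_trans size_p0 (leq_trans (leq_addr _ _) card_P).
  - have P0_gt0 : (0 < #|P false|)%N by apply/card_gt0P; exists i0.
    have P1_gt0 : (0 < #|P true|)%N by apply/card_gt0P; exists i1.
    by rewrite !nth_default // ?(leq_trans size_p0) ?(leq_trans size_p1) //; lia.
have [x pol_x] := pol_onto size_q top_q.
by exists x => -[i b] ibS; rewrite pol_x q_v // inE.
Qed.

Variable c : bool -> F.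
Hypothesis c_neq : c false != c true.
Hypothesis c_generic : forall b, [/\ c b != 0, c b != 1 & c b != -1].

Definition weight (k : cell) : F := c (if k.1 is inl _ then k.2 else ~~ k.2).

Definition code (x y : V) : Z :=
  [ffun k => (pol k.2 x).[alpha k.1] - weight k * (pol k.2 y).[alpha k.1]].

Lemma code_inj x y x' y' : code x y = code x' y' -> x = x' /\ y = y'.
Proof.
move=> eq_code; set X := x - x'; set Y := y - y'.
have XY k : (pol k.2 X).[alpha k.1] = weight k * (pol k.2 Y).[alpha k.1].
  have := congr1 (fun z : Z => z k) eq_code.
  rewrite !ffunE !raddfB !hornerD !hornerN => eq_k.
  by rewrite -[(pol k.2 x).[_]](subrK (weight k * (pol k.2 y).[alpha k.1])) eq_k; ring.
have X_low b : pol b X = c b *: pol b Y.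
  apply/eqP; rewrite -subr_eq0; apply/eqP.
  apply: (poly_eq0_on (x := fun i : 'I_t => alpha (inl i)) (A := [set: 'I_t])).
  - by move=> i j _ _ /alpha_inj [].
  - rewrite cardsT card_ord; apply: leq_trans (size_polyD _ _) _.
    by rewrite geq_max size_pol size_polyN (leq_trans (size_scale_leq _ _)) ?size_pol.
  - by move=> i _; rewrite /root hornerD hornerN hornerZ (XY (inl i, b)) subrr.
have Y_top : Y None = 0.
  have top b := congr1 (fun p : {poly F} => p`_d) (X_low b).
  move: (top false) (top true); rewrite !coefZ !coef_pol_top => X_false X_true.
  apply/eqP.
  have : (c false - c true) * Y None == 0 by rewrite mulrBl -X_false -X_true subrr.
  by rewrite mulf_eq0 subr_eq0 (negbTE c_neq).
have Y_high b : pol b Y = 0.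
  apply: (poly_eq0_on (x := fun i : 'I_d => alpha (inr i)) (A := [set: 'I_d])).
  - by move=> i j _ _ /alpha_inj [].
  - by rewrite cardsT card_ord size_pol_top0.
  have c_flip : c b != c (~~ b) by case: b; rewrite // eq_sym.
  move=> i _; have /eqP := XY (inr i, b); rewrite /= X_low hornerZ -subr_eq0 -mulrBl.
  by rewrite mulf_eq0 subr_eq0 (negbTE c_flip).
have X_high b : pol b X = 0 by rewrite X_low Y_high scaler0.
by split; apply/eqP; rewrite -subr_eq0; apply/eqP; apply: pol_eq0.
Qed.

Lemma affine_oa_of_form (D : V -> Z) (A B : cell -> F) :
  (forall k, B k != 0) ->
  (forall x k, D x k = A k + B k * (pol k.2 x).[alpha k.1]) -> affine_oa t D.
Proof.
move=> B_nz DE; split=> [x y|S small_S u].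
  by apply/ffunP => k; rewrite !ffunE !DE !raddfD raddf0 /= hornerD horner0; ring.
have [x pol_x] := pol_interpolation (fun k => (u k - A k) / B k) small_S.
by exists x => k kS; rewrite DE pol_x // mulrC divfK ?B_nz // addrC subrK.
Qed.

Lemma weight_generic k :
  [/\ - weight k != 0, 1 - weight k != 0 & 1 + weight k != 0].
Proof.
have [w0 w1 wN1] := c_generic (if k.1 is inl _ then k.2 else ~~ k.2).
by split; [rewrite oppr_eq0 | rewrite subr_eq0 eq_sym | rewrite addrC addr_eq0].
Qed.

Definition mirror (x : V) : V := [ffun=> 1] - x.

Lemma affine_oa_code_row x : affine_oa t (code x).
Proof.
apply: (affine_oa_of_form (A := fun k => (pol k.2 x).[alpha k.1])
                          (B := fun k => - weight k)).
  by move=> k; case: (weight_generic k).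
by move=> y k; rewrite ffunE mulNr.
Qed.

Lemma affine_oa_code_col y : affine_oa t (code^~ y).
Proof.
apply: (affine_oa_of_form (A := fun k => - weight k * (pol k.2 y).[alpha k.1])
                          (B := fun=> 1)).
  by move=> k; rewrite oner_eq0.
by move=> x k; rewrite ffunE mul1r addrC mulNr.
Qed.

Lemma affine_oa_code_diag : affine_oa t (fun x => code x x).
Proof.
apply: (affine_oa_of_form (A := fun=> 0) (B := fun k => 1 - weight k)).
  by move=> k; case: (weight_generic k).
by move=> x k; rewrite ffunE; ring.
Qed.

Lemma affine_oa_code_antidiag : affine_oa t (fun x => code x (mirror x)).
Proof.
apply: (affine_oa_of_form (A := fun k => - weight k * (pol k.2 [ffun=> 1]).[alpha k.1])
                          (B := fun k => 1 + weight k)).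
  by move=> k; case: (weight_generic k).
by move=> x k; rewrite ffunE raddfB /= hornerD hornerN; ring.
Qed.

Lemma mirrorK : involutive mirror.
Proof. by move=> x; rewrite /mirror opprB addrC subrK. Qed.

Lemma mirror_fixed_uniq x y : mirror x = x -> mirror y = y -> x = y.
Proof.
move=> /ffunP mx /ffunP my; apply/ffunP => o.
apply: half_uniq; [rewrite -{1}(mx o) | rewrite -{1}(my o)]; by rewrite !ffunE subrK.
Qed.

Section Square.
Variables (n : nat) (psi : 'I_n -> V).
Hypothesis psi_bij : bijective psi.
Hypothesis psi_rev : forall i, psi (rev_ord i) = mirror (psi i).

Definition square : 'M[int]_n :=
  \matrix_(i, j) (base_code (code (psi i) (psi j)))%:Z.

Lemma sum_psi (G : V -> int) : \sum_(i < n) G (psi i) = \sum_x G x.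
Proof. by rewrite [RHS](reindex psi) //; apply: onW_bij. Qed.

Lemma power_sum_affine_oa (D : V -> Z) e : affine_oa t D -> (e <= t)%N ->
  \sum_x (base_code (D x))%:Z ^+ e = \sum_x (base_code (code 0 x))%:Z ^+ e.
Proof.
move=> oa_D le_et; under eq_bigr do rewrite base_code_int.
under [RHS]eq_bigr do rewrite base_code_int.
pose w (k : cell) (a : F) := Posz (enum_rank a * #|F| ^ enum_rank k).
exact: (affine_oa_moment w oa_D (affine_oa_code_row 0) le_et).
Qed.

Lemma square_magic e : (e <= t)%N -> general_magic (mx_epow square e).
Proof.
move=> le_et; exists (\sum_x (base_code (code 0 x))%:Z ^+ e); split; [|split; [|split]].
- move=> i; rewrite -(power_sum_affine_oa (affine_oa_code_row (psi i)) le_et) -sum_psi.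
  by apply: eq_bigr => j _; rewrite !mxE.
- move=> j; rewrite -(power_sum_affine_oa (affine_oa_code_col (psi j)) le_et) -sum_psi.
  by apply: eq_bigr => i _; rewrite !mxE.
- rewrite -(power_sum_affine_oa affine_oa_code_diag le_et) -sum_psi.
  by apply: eq_bigr => i _; rewrite !mxE.
- rewrite -(power_sum_affine_oa affine_oa_code_antidiag le_et) -sum_psi.
  by apply: eq_bigr => i _; rewrite !mxE psi_rev.
Qed.

Lemma square_consecutive : consecutive_entries square.
Proof.
pose g (ij : 'I_n * 'I_n) := base_code (code (psi ij.1) (psi ij.2)).
exists 0.
have -> : [seq square ij.1 ij.2 | ij : 'I_n * 'I_n] =
          map Posz [seq g ij | ij : 'I_n * 'I_n].
  by rewrite -map_comp; apply: eq_map => ij; rewrite mxE.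
have -> : [seq 0 + k%:Z | k <- iota 0 (n * n)] = map Posz (iota 0 (n * n)).
  by apply: eq_map => k; rewrite add0r.
apply: perm_map.
have -> : (n * n)%N = #|{: 'I_n * 'I_n}| by rewrite card_prod card_ord.
apply: perm_iota_inj => [[i j] [i' j'] /base_code_inj/code_inj[]|ij].
  by move=> /(bij_inj psi_bij) /= -> /(bij_inj psi_bij) /= ->.
apply: leq_trans (base_code_lt _) _.
rewrite [X in (_ <= X)%N]card_prod (bij_eq_card psi_bij) card_ffun -expnD.
rewrite !card_prod card_sum card_option card_prod !card_ord card_bool.
by apply: eq_leq; congr expn; lia.
Qed.

End Square.

Lemma exists_multimagic_square n :
  #|V| = n -> exists M : 'M[int]_n, multimagic_square t M.
Proof.
move=> card_V.
have [psi psi_bij psi_rev] := palindromic_enum mirrorK mirror_fixed_uniq card_V.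
exists (square psi); split; last exact: square_consecutive.
by move=> e /andP[_ le_et]; apply: square_magic.
Qed.

End Construction.

Lemma exists_inj_of_card_le (I T : finType) :
  (#|I| <= #|T|)%N -> exists f : I -> T, injective f.
Proof.
move=> le_IT; exists (fun i => enum_val (widen_ord le_IT (enum_rank i))).
by move=> i j /enum_val_inj [] /val_inj; apply: enum_rank_inj.
Qed.

Lemma exists_two_notin (T : finType) (s : seq T) :
  (size s + 2 <= #|T|)%N -> exists x y, [/\ x != y, x \notin s & y \notin s].
Proof.
move=> le_sT; have : (1 < #|~: [set x in s]|)%N.
  have : (#|[set x in s]| <= size s)%N by rewrite cardsE; apply: card_size.
  by have := cardsC [set x in s]; lia.
by case/card_gt1P => x [y []]; rewrite !inE => xs ys xy; exists x, y.
Qed.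

Local Close Scope ring_scope.

Theorem theorem1p2 (t q : nat) :
  (3 <= t)%N -> prime_power q -> (2 * t - 1 <= q)%N ->
  exists M : 'M[int]_(q ^ (2 * t - 1)), multimagic_square t M.
Proof.
move=> t_ge3 [p [k [p_prime [k_gt0 ->]]]] le_tq.
have [F _ card_F] := pPrimePowerField p_prime k_gt0.
have [d t_eq] : exists d, t = d.+1 by exists t.-1; lia.
have [alpha alpha_inj] : exists alpha : point d -> F, injective alpha.
  by apply: exists_inj_of_card_le; rewrite card_sum !card_ord card_F; lia.
have [|x [y [xy x_generic y_generic]]] := @exists_two_notin F [:: 0; 1; -1]%R.
  by rewrite card_F /=; lia.
pose c b := if b then y else x.
have c_generic b : [/\ c b != 0, c b != 1 & c b != -1]%R.
  by case: b; [move: y_generic | move: x_generic]; rewrite !inE !negb_or => /and3P[].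
subst t; apply: (exists_multimagic_square alpha_inj (c := c)) => //.
rewrite card_ffun card_option card_prod card_ord card_bool card_F.
by congr expn; lia.
Qed.
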